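(* Let $k>1$ and let $f:\mathbb{R}\to\mathbb{R}$ be a positive, continuously differentiable function. Then the planar system $$\frac{dI}{d\tau}=I\,[f(R)(1-I-R)-k],\qquad \frac{dR}{d\tau}=(k-1)I-R$$ has no non-constant periodic solution $(I(\tau),R(\tau))$ with $I(\tau)>0$ for all $\tau$. *)

From Stdlib Require Import Reals.
From Coquelicot Require Import Coquelicot.
Open Scope R_scope.

Definition cont_diff1 (f : R -> R) : Prop :=
  (forall x, ex_derive f x) /\ (forall x, continuous (Derive f) x).

Definition is_solution (f : R -> R) (k : R) (I Rc : R -> R) : Prop :=
  forall t,
    is_derive I t (I t * (f (Rc t) * (1 - I t - Rc t) - k)) /\
    is_derive Rc t ((k - 1) * I t - Rc t).

Definition periodic2 (I Rc : R -> R) : Prop :=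
  exists T, 0 < T /\ forall t, I (t + T) = I t /\ Rc (t + T) = Rc t.

Definition nonconstant2 (I Rc : R -> R) : Prop :=
  exists t s, I t <> I s \/ Rc t <> Rc s.

(** The second component stays positive, since [R' + R = (k-1) I > 0] and
    [(e^t R)' > 0] over a period forces [R > 0].  Along a positive solution
    the function
      [V(I, R) = P(R) - (k-1) I + R ln I - R ln (R/(k-1)) + R],
    where [P' r = f r (1 - r) - k - f r r / (k-1)], satisfies
      [dV/dt = R' (f(R) (I - R/(k-1)) + ln I - ln (R/(k-1)))]
    with [R' = (k-1) (I - R/(k-1))]; both factors have the sign of
    [I - R/(k-1)], so [V] is nondecreasing.  A periodic nondecreasing function
    is constant, so [dV/dt] vanishes, which forces [R' = 0]: [R] is constant,
    and then so is [I = R/(k-1)]. *)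

From Stdlib Require Import Reals Lra.
From Coquelicot Require Import Coquelicot.
Open Scope R_scope.

Lemma MVT_is_derive (g g' : R -> R) (a b : R) :
  a < b -> (forall t, is_derive g t (g' t)) ->
  exists c, a < c < b /\ g b - g a = g' c * (b - a).
Proof.
  intros hab hg.
  destruct (MVT_cor2 g g' a b hab) as [c [e hc]].
  - intros c _. apply is_derive_Reals, hg.
  - exists c. split; assumption.
Qed.

Lemma nondecreasing_of_derive_nonneg (g g' : R -> R) :
  (forall t, is_derive g t (g' t)) -> (forall t, 0 <= g' t) ->
  forall a b, a <= b -> g a <= g b.
Proof.
  intros hg hpos a b hab.
  destruct (Rle_lt_or_eq_dec a b hab) as [lt | ->]; [| lra].
  destruct (MVT_is_derive g g' a b lt hg) as [c [_ e]].
  assert (0 <= g' c * (b - a)) by (apply Rmult_le_pos; [apply hpos | lra]).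
  lra.
Qed.

Lemma const_of_derive_zero (g : R -> R) :
  (forall t, is_derive g t 0) -> forall a b, g a = g b.
Proof.
  intros hg.
  assert (hlt : forall a b, a < b -> g a = g b).
  { intros a b hab.
    destruct (MVT_is_derive g (fun _ => 0) a b hab hg) as [c [_ e]]. lra. }
  intros a b. destruct (Rtotal_order a b) as [h | [-> | h]].
  - now apply hlt.
  - reflexivity.
  - symmetry. now apply hlt.
Qed.

(* A nondecreasing [T]-periodic function is constant on every interval of
   length [T], in particular near [t]. *)
Lemma derive_zero_of_periodic_nondecreasing (g : R -> R) (T t l : R) :
  0 < T -> (forall s, g (s + T) = g s) ->
  (forall a b, a <= b -> g a <= g b) ->
  is_derive g t l -> l = 0.
Proof.
  intros hT hper hmono hg.
  assert (hloc : is_derive g t 0).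
  { apply (is_derive_ext_loc (fun _ => g (t - T / 2))); [| exact (is_derive_const _ t)].
    assert (hT2 : 0 < T / 2) by lra.
    exists (mkposreal _ hT2). intros s hs.
    unfold ball in hs; simpl in hs; unfold AbsRing_ball, abs, minus, plus, opp in hs; simpl in hs.
    apply Rabs_def2 in hs.
    apply Rle_antisym.
    - apply hmono. lra.
    - rewrite <- (hper (t - T / 2)). apply hmono. lra. }
  rewrite <- (is_derive_unique _ _ _ hg). exact (is_derive_unique _ _ _ hloc).
Qed.

(* [(e^t x)' = e^t u > 0], so [e^(t+T) x t = e^(t+T) x (t+T) > e^t x t]. *)
Lemma periodic_relaxation_pos (x u : R -> R) (T : R) :
  0 < T -> (forall t, x (t + T) = x t) ->
  (forall t, is_derive x t (u t - x t)) -> (forall t, 0 < u t) ->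
  forall t, 0 < x t.
Proof.
  intros hT hper hx hu t.
  set (g := fun s => exp s * x s).
  assert (hg : forall s, is_derive g s (exp s * u s)).
  { intro s. unfold g. auto_derive; [eexists; apply hx |].
    change (fun y => x y) with x. rewrite (is_derive_unique _ _ _ (hx s)). ring. }
  destruct (MVT_is_derive g _ t (t + T) ltac:(lra) hg) as [c [_ e]].
  unfold g in e. rewrite hper in e.
  assert (0 < exp c * u c * (t + T - t)).
  { apply Rmult_lt_0_compat; [apply Rmult_lt_0_compat; [apply exp_pos | apply hu] | lra]. }
  assert (exp t < exp (t + T)) by (apply exp_increasing; lra).
  nra.
Qed.

Lemma affine_ln_sign (a b phi : R) :
  0 < a -> 0 < b -> 0 <= phi -> a <> b ->
  0 < (a - b) * (phi * (a - b) + ln a - ln b).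
Proof.
  intros ha hb hphi hab.
  destruct (Rtotal_order a b) as [h | [h | h]]; [| contradiction |].
  - assert (ln a < ln b) by now apply ln_increasing.
    assert (0 <= phi * (b - a)) by (apply Rmult_le_pos; lra).
    nra.
  - assert (ln b < ln a) by now apply ln_increasing.
    assert (0 <= phi * (a - b)) by (apply Rmult_le_pos; lra).
    nra.
Qed.

Definition lyapunov_primitive (k : R) (f : R -> R) (r : R) : R :=
  RInt (fun s => f s * (1 - s) - k - f s * s / (k - 1)) 0 r.

Lemma is_derive_lyapunov_primitive (k : R) (f : R -> R) (r : R) :
  (forall x, continuous f x) ->
  is_derive (lyapunov_primitive k f) r (f r * (1 - r) - k - f r * r / (k - 1)).
Proof.
  intros hf.
  set (h := fun s => f s * (1 - s) - k - f s * s / (k - 1)).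
  assert (hcont : forall s, continuous h s).
  { assert (hf' : forall x, continuity_pt f x) by (intro; apply continuity_pt_filterlim, hf).
    intro s. apply continuity_pt_filterlim. unfold h. reg. apply hf'. }
  apply (is_derive_RInt h _ 0); [| apply hcont].
  apply filter_forall. intro b.
  apply (RInt_correct (V := R_CompleteNormedModule)).
  apply ex_RInt_continuous. intros; apply hcont.
Qed.

Definition lyapunov (k : R) (f : R -> R) (i r : R) : R :=
  lyapunov_primitive k f r - (k - 1) * i + r * ln i - r * ln (r / (k - 1)) + r.

Lemma lyapunov_dissipation_pos (k phi i r : R) :
  1 < k -> 0 < i -> 0 < r -> 0 <= phi -> (k - 1) * i <> r ->
  0 < ((k - 1) * i - r) * (phi * (i - r / (k - 1)) + ln i - ln (r / (k - 1))).
Proof.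
  intros hk hi hr hphi hir.
  assert (hq : 0 < r / (k - 1)) by (apply Rdiv_lt_0_compat; lra).
  assert (hiq : i <> r / (k - 1)).
  { intro e. apply hir. rewrite e. field. lra. }
  replace ((k - 1) * i - r) with ((k - 1) * (i - r / (k - 1))) by (field; lra).
  rewrite Rmult_assoc.
  apply Rmult_lt_0_compat; [lra |].
  now apply affine_ln_sign.
Qed.

Section PositiveSolution.

Variables (k : R) (f : R -> R) (I Rc : R -> R).
Hypotheses (hk : 1 < k) (hfpos : forall x, 0 < f x) (hf : forall x, continuous f x)
  (hsol : is_solution f k I Rc) (hI : forall t, 0 < I t) (hR : forall t, 0 < Rc t).

Lemma is_derive_lyapunov_solution (t : R) :
  is_derive (fun s => lyapunov k f (I s) (Rc s)) t
    (((k - 1) * I t - Rc t) *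
     (f (Rc t) * (I t - Rc t / (k - 1)) + ln (I t) - ln (Rc t / (k - 1)))).
Proof.
  destruct (hsol t) as [dI dR].
  assert (dP := is_derive_lyapunov_primitive k f (Rc t) hf).
  assert (hq : 0 < Rc t / (k - 1)) by (apply Rdiv_lt_0_compat; [apply hR | lra]).
  unfold lyapunov.
  auto_derive.
  - repeat split; try (eexists; eassumption); [apply hI | exact hq].
  - change (fun x => lyapunov_primitive k f x) with (lyapunov_primitive k f).
    change (fun x => I x) with I. change (fun x => Rc x) with Rc.
    rewrite (is_derive_unique _ _ _ dP), (is_derive_unique _ _ _ dI),
      (is_derive_unique _ _ _ dR).
    match goal with |- ?a = ?b => change (@eq R a b) end.
    assert (I t <> 0) by (apply Rgt_not_eq, hI).
    assert (Rc t <> 0) by (apply Rgt_not_eq, hR).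
    unfold Rdiv. field. lra.
Qed.

Lemma lyapunov_solution_nondecreasing (a b : R) :
  a <= b -> lyapunov k f (I a) (Rc a) <= lyapunov k f (I b) (Rc b).
Proof.
  apply (nondecreasing_of_derive_nonneg _ _ is_derive_lyapunov_solution).
  intro t.
  destruct (Req_dec ((k - 1) * I t) (Rc t)) as [e | ne].
  - rewrite e, Rminus_diag, Rmult_0_l. apply Rle_refl.
  - apply Rlt_le, lyapunov_dissipation_pos; auto.
    apply Rlt_le, hfpos.
Qed.

Variable T : R.
Hypotheses (hT : 0 < T) (hper : forall t, I (t + T) = I t /\ Rc (t + T) = Rc t).

Lemma periodic_solution_balanced (t : R) : (k - 1) * I t = Rc t.
Proof.
  destruct (Req_dec ((k - 1) * I t) (Rc t)) as [e | ne]; [exact e | exfalso].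
  assert (hLper : forall s, lyapunov k f (I (s + T)) (Rc (s + T)) = lyapunov k f (I s) (Rc s)).
  { intro s. now rewrite (proj1 (hper s)), (proj2 (hper s)). }
  assert (hzero := derive_zero_of_periodic_nondecreasing _ T t _ hT hLper
                     lyapunov_solution_nondecreasing (is_derive_lyapunov_solution t)).
  assert (hpos := lyapunov_dissipation_pos k (f (Rc t)) (I t) (Rc t) hk (hI t) (hR t)
                    (Rlt_le _ _ (hfpos _)) ne).
  lra.
Qed.

Lemma periodic_solution_constant (t s : R) : I t = I s /\ Rc t = Rc s.
Proof.
  assert (hRc : Rc t = Rc s).
  { apply const_of_derive_zero. intro u.
    assert (dR := proj2 (hsol u)).
    now rewrite periodic_solution_balanced, Rminus_diag in dR. }
  split; [| exact hRc].
  apply (Rmult_eq_reg_l (k - 1)); [| lra].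
  now rewrite !periodic_solution_balanced.
Qed.

End PositiveSolution.

Theorem lemma2 (k : R) (f : R -> R)
  (hk : 1 < k) (hfpos : forall x, 0 < f x) (hf : cont_diff1 f) :
  ~ exists I Rc : R -> R,
      is_solution f k I Rc /\ periodic2 I Rc /\ nonconstant2 I Rc /\
      (forall t, 0 < I t).
Proof.
  intros [I [Rc [hsol [[T [hT hper]] [[t [s hts]] hI]]]]].
  assert (hfc : forall x, continuous f x).
  { intro x. apply (ex_derive_continuous (V := R_NormedModule)), (proj1 hf). }
  assert (hR : forall t, 0 < Rc t).
  { apply (periodic_relaxation_pos Rc (fun t => (k - 1) * I t) T hT).
    - intro u. apply (hper u).
    - intro u. apply (hsol u).
    - intro u. apply Rmult_lt_0_compat; [lra | apply hI]. }
  destruct (periodic_solution_constant k f I Rc hk hfpos hfc hsol hI hR T hT hper t s).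
  tauto.
Qed.
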